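(* For every $n\ge 1$, $\min^-_{\omega+1}\not\le_{\mathrm{W}}\operatorname{BWT}_n$.
   Context: Represented spaces: a representation of a set $X$ is a partial surjection $\delta_X:\subseteq\mathbb{N}^\mathbb{N}\to X$. For a partial multi-valued function $f:\subseteq X\rightrightarrows Y$, a realizer is a partial $F:\subseteq\mathbb{N}^\mathbb{N}\to\mathbb{N}^\mathbb{N}$ with $\delta_Y(F(p))\in f(\delta_X(p))$ for all $p$ with $\delta_X(p)\in\mathrm{dom}(f)$. Weihrauch reducibility: $f\le_{\mathrm{W}} g$ iff there are computable partial $H:\subseteq\mathbb{N}^\mathbb{N}\times\mathbb{N}^\mathbb{N}\to\mathbb{N}^\mathbb{N}$ and $K:\subseteq\mathbb{N}^\mathbb{N}\to\mathbb{N}^\mathbb{N}$ such that $p\mapsto H(p,G(K(p)))$ is a realizer of $f$ for every realizer $G$ of $g$. $\omega+1:=\{-2^{-n}:n\in\mathbb{N}\}\cup\{0\}\subseteq\mathbb{R}$, a computable metric space with the Euclidean metric and dense set $\omega+1$ itself; points are represented by the Cauchy representation. Closed subsets of $\omega+1$ are represented negatively ($\mathcal{A}_-(\omega+1)$): a name of a closed $A$ is an enumeration of basic open balls $B(a,q)$ ($a\in\omega+1$, $q$ a nonnegative rational) whose union is $(\omega+1)\setminus A$. $\min^-_{\omega+1}:\subseteq\mathcal{A}_-(\omega+1)\to\omega+1$ maps each nonempty closed $A$ to $\min A$. For $n\ge1$, $\operatorname{BWT}_n:\subseteq\{0,\dots,n-1\}^\mathbb{N}\rightrightarrows\{0,\dots,n-1\}$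 (discrete space $\{0,\dots,n-1\}$) maps a sequence to the set of its cluster points, i.e. the values that occur infinitely often. *)

From Stdlib Require Import Reals Arith Cantor.
Open Scope R_scope.

Definition Baire := nat -> nat.

Definition npair (x y : nat) : nat := Cantor.to_nat (x, y).
Definition nunpair (n : nat) : nat * nat := Cantor.of_nat n.

(** Syntax of (unary) partial recursive functions relative to an oracle,
    using Cantor pairing for tuples. *)
Inductive prog : Type :=
| PZero : prog
| PSucc : prog
| PId : prog
| PFst : prog
| PSnd : prog
| POracle : prog
| PComp : prog -> prog -> prog
| PPair : prog -> prog -> prog
| PRec : prog -> prog -> prog
| PMu : prog -> prog.

Inductive eval (p : Baire) : prog -> nat -> nat -> Prop :=
| ev_zero x : eval p PZero x 0
| ev_succ x : eval p PSucc x (S x)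
| ev_id x : eval p PId x x
| ev_fst x : eval p PFst x (fst (nunpair x))
| ev_snd x : eval p PSnd x (snd (nunpair x))
| ev_oracle x : eval p POracle x (p x)
| ev_comp f g x y z : eval p g x y -> eval p f y z -> eval p (PComp f g) x z
| ev_pair f g x y z : eval p f x y -> eval p g x z ->
    eval p (PPair f g) x (npair y z)
| ev_rec0 f g x a r : nunpair x = (a, 0%nat) -> eval p f a r ->
    eval p (PRec f g) x r
| ev_recS f g x a b r' r : nunpair x = (a, S b) ->
    eval p (PRec f g) (npair a b) r' ->
    eval p g (npair a (npair b r')) r ->
    eval p (PRec f g) x r
| ev_mu f x y : eval p f (npair x y) 0%nat ->
    (forall z, (z < y)%nat -> exists v, v <> 0%nat /\ eval p f (npair x z) v) ->
    eval p (PMu f) x y.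

Definition computes (e : prog) (p q : Baire) : Prop :=
  forall n, eval p e n (q n).

Definition bpair (p q : Baire) : Baire :=
  fun n => if Nat.even n then p (Nat.div2 n) else q (Nat.div2 n).

(** A representation of X is given as a relation [delta p x] ("p is a name
    of x"); a partial multi-valued function [f : X ⇉ Y] is given by its
    domain [domf] and the relation [f x y] ("y ∈ f(x)"). *)
Definition realizer {X Y : Type} (dX : Baire -> X -> Prop)
    (dY : Baire -> Y -> Prop) (domf : X -> Prop) (f : X -> Y -> Prop)
    (F : Baire -> Baire) : Prop :=
  forall p x, dX p x -> domf x -> exists y, dY (F p) y /\ f x y.

(** f ≤_W g : there are computable partial H, K such that
    p |-> H(p, G(K p)) realizes f for every realizer G of g.
    (Realizers G may be taken total w.l.o.g.; H and K are partial:
    definedness is part of the requirement.) *)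
Definition Wle {X Y U V : Type}
    (dX : Baire -> X -> Prop) (dY : Baire -> Y -> Prop)
    (domf : X -> Prop) (f : X -> Y -> Prop)
    (dU : Baire -> U -> Prop) (dV : Baire -> V -> Prop)
    (domg : U -> Prop) (g : U -> V -> Prop) : Prop :=
  exists H K : prog,
    forall G : Baire -> Baire, realizer dU dV domg g G ->
      forall p x, dX p x -> domf x ->
        exists k, computes K p k /\
        exists r, computes H (bpair p (G k)) r /\
        exists y, dY r y /\ f x y.

Definition omega1 (x : R) : Prop := x = 0 \/ exists n : nat, x = - (/2) ^ n.

(** Numbering of the dense set ω+1: 0 |-> 0, k+1 |-> -2^{-k}. *)
Definition alpha (k : nat) : R :=
  match k with O => 0 | S k' => - (/2) ^ k' end.

Definition delta_omega1 (p : Baire) (x : R) : Prop :=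
  omega1 x /\
  (forall i j : nat, (i <= j)%nat ->
      Rabs (alpha (p i) - alpha (p j)) <= (/2) ^ i) /\
  Un_cv (fun i => alpha (p i)) x.

(** Basic open balls B(a,q), a ∈ ω+1, q ≥ 0 rational, coded by naturals:
    n codes (alpha a, num/(den+1)) where n = <a, <num, den>>. *)
Definition ball_center (n : nat) : R := alpha (fst (nunpair n)).
Definition ball_radius (n : nat) : R :=
  let c := nunpair (snd (nunpair n)) in
  INR (fst c) / INR (S (snd c)).
Definition in_ball (n : nat) (x : R) : Prop :=
  omega1 x /\ Rabs (x - ball_center n) < ball_radius n.

Definition delta_closed_neg (p : Baire) (A : R -> Prop) : Prop :=
  forall x, A x <-> (omega1 x /\ forall i, ~ in_ball (p i) x).

Definition min_dom (A : R -> Prop) : Prop := exists x, A x.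
Definition min_rel (A : R -> Prop) (y : R) : Prop :=
  A y /\ forall z, A z -> y <= z.

Definition delta_seq (n : nat) (p : Baire) (s : nat -> nat) : Prop :=
  (forall i, (p i < n)%nat) /\ (forall i, s i = p i).

Definition delta_fin (n : nat) (p : Baire) (k : nat) : Prop :=
  (k < n)%nat /\ p 0%nat = k.

Definition BWT_dom (n : nat) (s : nat -> nat) : Prop := forall i, (s i < n)%nat.
Definition BWT_rel (n : nat) (s : nat -> nat) (k : nat) : Prop :=
  (k < n)%nat /\ forall N, exists m, (N <= m)%nat /\ s m = k.

(* Fix the realizer of BWT_n that answers with a constant sequence (a cluster
   point, which exists by the pigeonhole principle).  A reduction then yields a
   machine H that, on every name p of a nonempty closed set A, computes a name
   of min A from p paired with one of the n constant oracles.  An adversary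
   feeds H the sets A_m = ω+1 ∩ [-2^-m, 0], enumerating the complement of
   A_m in ever finer stages.  Whatever colour c H uses for A_m, by continuity a
   finite prefix of the name already forces H to output an approximation to
   -2^-m; extending the prefix to a name of A_(m+1) makes colour c useless from
   then on.  After n+1 stages n+1 distinct colours are spent, which is
   impossible. *)

From Stdlib Require Import Reals Arith Cantor Lia List Classical ClassicalEpsilon Lra.

(* The premise of [ev_mu] quantifies over derivations under an existential, so
   the automatically generated induction principle gives no hypothesis for
   them. *)
Definition eval_nested_ind (p : Baire) (P : prog -> nat -> nat -> Prop)
  (Hzero : forall x, P PZero x 0%nat)
  (Hsucc : forall x, P PSucc x (S x))
  (Hid : forall x, P PId x x)
  (Hfst : forall x, P PFst x (fst (nunpair x)))
  (Hsnd : forall x, P PSnd x (snd (nunpair x)))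
  (Horc : forall x, P POracle x (p x))
  (Hcomp : forall f g x y z, eval p g x y -> P g x y -> eval p f y z -> P f y z ->
     P (PComp f g) x z)
  (Hpair : forall f g x y z, eval p f x y -> P f x y -> eval p g x z -> P g x z ->
     P (PPair f g) x (npair y z))
  (Hrec0 : forall f g x a r, nunpair x = (a, 0%nat) -> eval p f a r -> P f a r ->
     P (PRec f g) x r)
  (HrecS : forall f g x a b r' r, nunpair x = (a, S b) ->
     eval p (PRec f g) (npair a b) r' -> P (PRec f g) (npair a b) r' ->
     eval p g (npair a (npair b r')) r -> P g (npair a (npair b r')) r ->
     P (PRec f g) x r)
  (Hmu : forall f x y, eval p f (npair x y) 0%nat -> P f (npair x y) 0%nat ->
     (forall z, (z < y)%nat ->
        exists v, v <> 0%nat /\ eval p f (npair x z) v /\ P f (npair x z) v) ->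
     P (PMu f) x y) :
  forall e x y, eval p e x y -> P e x y :=
  fix F e x y (H : eval p e x y) {struct H} : P e x y :=
  match H in eval _ e x y return P e x y with
  | ev_zero _ x => Hzero x
  | ev_succ _ x => Hsucc x
  | ev_id _ x => Hid x
  | ev_fst _ x => Hfst x
  | ev_snd _ x => Hsnd x
  | ev_oracle _ x => Horc x
  | ev_comp _ f g x y z H1 H2 => Hcomp f g x y z H1 (F _ _ _ H1) H2 (F _ _ _ H2)
  | ev_pair _ f g x y z H1 H2 => Hpair f g x y z H1 (F _ _ _ H1) H2 (F _ _ _ H2)
  | ev_rec0 _ f g x a r E H1 => Hrec0 f g x a r E H1 (F _ _ _ H1)
  | ev_recS _ f g x a b r' r E H1 H2 =>
      HrecS f g x a b r' r E H1 (F _ _ _ H1) H2 (F _ _ _ H2)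
  | ev_mu _ f x y H0 Hz => Hmu f x y H0 (F _ _ _ H0)
      (fun z hz => match Hz z hz with
                   | ex_intro _ v (conj hv ev) =>
                       ex_intro _ v (conj hv (conj ev (F _ _ _ ev)))
                   end)
  end.

Lemma eval_deterministic (p : Baire) e x y1 y2 :
  eval p e x y1 -> eval p e x y2 -> y1 = y2.
Proof.
  intros H1; revert y2; revert e x y1 H1.
  apply (eval_nested_ind p (fun e x y1 => forall y2, eval p e x y2 -> y1 = y2));
    intros; try (inversion H; subst; reflexivity).
  - inversion H3; subst.
    match goal with
    | h1 : eval p g x ?w, h2 : eval p f ?w y2 |- _ => apply H2; rewrite (H0 _ h1); exact h2
    end.
  - inversion H3; subst.
    match goal with
    | h1 : eval p f x _, h2 : eval p g x _ |- _ => rewrite (H0 _ h1), (H2 _ h2); reflexivity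
    end.
  - inversion H2; subst;
      match goal with h : nunpair x = _ |- _ => rewrite H in h; injection h as <- end.
    + auto.
    + discriminate.
  - inversion H4; subst; match goal with h : nunpair x = _ |- _ => rewrite H in h end.
    + discriminate.
    + match goal with h : (a, S b) = _ |- _ => injection h as <- <- end.
      match goal with
      | h : eval p (PRec f g) (npair a b) ?w |- _ => assert (r' = w) by (apply H1; exact h)
      end.
      subst; auto.
  - inversion H2; subst.
    destruct (lt_eq_lt_dec y y2) as [[Hlt | ->] | Hgt]; auto; exfalso.
    + destruct (H5 y Hlt) as [v [Hv Hev]]. apply Hv. symmetry. exact (H0 _ Hev).
    + destruct (H1 y2 Hgt) as [v [Hv [_ IH]]]. apply Hv. exact (IH _ H4).
Qed.

Definition agree (q p : Baire) (N : nat) : Prop := forall i, (i < N)%nat -> q i = p i.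

Lemma agree_le q p N M : (M <= N)%nat -> agree q p N -> agree q p M.
Proof. intros HMN A i Hi. apply A. lia. Qed.

Lemma agree_trans q p s N : agree q p N -> agree p s N -> agree q s N.
Proof. intros A B i Hi. rewrite A, B; auto. Qed.

Lemma agree_uniform (p : Baire) (P : Baire -> nat -> Prop) y :
  (forall z, (z < y)%nat -> exists N, forall q, agree q p N -> P q z) ->
  exists N, forall q, agree q p N -> forall z, (z < y)%nat -> P q z.
Proof.
  induction y as [|y IH]; intros Hloc.
  - exists 0%nat; intros; lia.
  - destruct IH as [N1 H1]; [intros z Hz; apply Hloc; lia|].
    destruct (Hloc y (Nat.lt_succ_diag_r y)) as [N2 H2].
    exists (N1 + N2)%nat; intros q A z Hz.
    destruct (Nat.eq_dec z y) as [-> | Hne].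
    + apply H2. eapply agree_le; [|exact A]. lia.
    + apply H1; [eapply agree_le; [|exact A]; lia | lia].
Qed.

Lemma eval_continuous (p : Baire) e x y :
  eval p e x y -> exists N, forall q, agree q p N -> eval q e x y.
Proof.
  revert e x y.
  apply (eval_nested_ind p (fun e x y => exists N, forall q, agree q p N -> eval q e x y));
    intros.
  1-5: exists 0%nat; intros; constructor.
  - exists (S x); intros q A. rewrite <- (A x) by lia. constructor.
  - destruct H0 as [N1 H0], H2 as [N2 H2]. exists (N1 + N2)%nat; intros q A.
    econstructor; [apply H0 | apply H2]; eapply agree_le; try eassumption; lia.
  - destruct H0 as [N1 H0], H2 as [N2 H2]. exists (N1 + N2)%nat; intros q A.
    econstructor; [apply H0 | apply H2]; eapply agree_le; try eassumption; lia.
  - destruct H1 as [N1 H1]. exists N1; intros q A. eapply ev_rec0; eauto.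
  - destruct H1 as [N1 H1], H3 as [N2 H3]. exists (N1 + N2)%nat; intros q A.
    eapply ev_recS; eauto; [apply H1 | apply H3]; eapply agree_le; try eassumption; lia.
  - destruct H0 as [N0 H0].
    destruct (agree_uniform p
                (fun q z => exists v, v <> 0%nat /\ eval q f (npair x z) v) y)
      as [N1 H2].
    { intros z Hz. destruct (H1 z Hz) as [v [Hv [_ [N HN]]]].
      exists N; intros q A. exists v; auto. }
    exists (N0 + N1)%nat; intros q A. constructor.
    + apply H0. eapply agree_le; [|exact A]. lia.
    + apply H2. eapply agree_le; [|exact A]. lia.
Qed.

Lemma bpair_agree p q g N : agree q p N -> agree (bpair q g) (bpair p g) N.
Proof.
  intros A i Hi. unfold bpair. destruct (Nat.even i); auto.
  apply A. pose proof (Nat.le_div2_diag_l i). lia.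
Qed.

Lemma cluster_point_eventually_bounded n (s : nat -> nat) N :
  (forall i, (N <= i)%nat -> (s i < n)%nat) -> exists c, BWT_rel n s c.
Proof.
  revert N; induction n as [|n IH]; intros N Hs.
  - specialize (Hs N (le_n N)). lia.
  - destruct (classic (forall M, exists m, (M <= m)%nat /\ s m = n)) as [Hinf | Hfin].
    + exists n; split; auto.
    + apply not_all_ex_not in Hfin as [M HM].
      destruct (IH (max N M)) as [c [Hc Hcinf]].
      * intros i Hi. assert (s i <> n) by (intro E; apply HM; exists i; split; [lia | auto]).
        specialize (Hs i ltac:(lia)). lia.
      * exists c; split; [lia | auto].
Qed.

Lemma cluster_point_exists n s : BWT_dom n s -> exists c, BWT_rel n s c.
Proof. intros Hs. apply (cluster_point_eventually_bounded n s 0). auto. Qed.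

(* Reducing mod n keeps the answer below n even on inputs that are not
   BWT_n-instances, which is what limits the adversary to n colours. *)
Definition cluster_point (n : nat) (q : Baire) : nat :=
  (epsilon (inhabits 0%nat) (BWT_rel n q) mod n)%nat.

Lemma cluster_point_lt n q : (1 <= n)%nat -> (cluster_point n q < n)%nat.
Proof. intros Hn. apply Nat.mod_upper_bound. lia. Qed.

Lemma cluster_point_realizer n :
  realizer (delta_seq n) (delta_fin n) (BWT_dom n) (BWT_rel n)
    (fun q _ => cluster_point n q).
Proof.
  intros p s [Hp Es] _.
  destruct (epsilon_spec (inhabits 0%nat) (BWT_rel n p) (cluster_point_exists n p Hp))
    as [Hlt Hinf].
  exists (cluster_point n p). unfold cluster_point. rewrite Nat.mod_small by exact Hlt.
  split; [split; auto | split; auto].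
  intros N. destruct (Hinf N) as [m [Hm E]]. exists m. rewrite Es. auto.
Qed.

Open Scope R_scope.

Lemma half_pow_pos k : 0 < (/2) ^ k.
Proof. apply pow_lt; lra. Qed.

Lemma half_pow_le1 k : (/2) ^ k <= 1.
Proof. induction k; simpl; [lra |]. pose proof (half_pow_pos k). lra. Qed.

Lemma half_pow_le j m : (j <= m)%nat -> (/2) ^ m <= (/2) ^ j.
Proof.
  intros Hjm. replace m with (j + (m - j))%nat by lia. rewrite pow_add.
  pose proof (half_pow_pos j); pose proof (half_pow_le1 (m - j));
  pose proof (half_pow_pos (m - j)). nra.
Qed.

Lemma omega1_bounds x : omega1 x -> -1 <= x <= 0.
Proof.
  intros [-> | [k ->]]; [lra |].
  pose proof (half_pow_pos k); pose proof (half_pow_le1 k). lra.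
Qed.

Lemma nunpair_npair a b : nunpair (npair a b) = (a, b).
Proof. apply Cantor.cancel_of_to. Qed.

(* The ball B(-1, 1 - 2^-j), whose trace on ω+1 is everything below -2^-j. *)
Definition ball_below (j : nat) : nat := npair 1 (npair (2 ^ j - 1) (2 ^ j - 1)).

Lemma in_ball_below j x : in_ball (ball_below j) x <-> omega1 x /\ x < - (/2) ^ j.
Proof.
  unfold in_ball, ball_center, ball_radius, ball_below.
  rewrite !nunpair_npair; simpl fst; simpl snd; rewrite nunpair_npair; simpl fst; simpl snd.
  pose proof (Nat.pow_nonzero 2 j ltac:(lia)).
  replace (S (2 ^ j - 1)) with (2 ^ j)%nat by lia.
  rewrite minus_INR, pow_INR by lia. simpl INR. replace (1 + 1) with 2 by lra.
  replace ((2 ^ j - 1) / 2 ^ j) with (1 - (/2) ^ j)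
    by (rewrite pow_inv; field; apply pow_nonzero; lra).
  simpl alpha.
  split; intros [Ho Hx]; split; auto; apply omega1_bounds in Ho.
  - rewrite Rabs_right in Hx; lra.
  - rewrite Rabs_right; lra.
Qed.

Definition tail_set (m : nat) (x : R) : Prop := omega1 x /\ - (/2) ^ m <= x.

Lemma tail_set_min m y : min_rel (tail_set m) y -> y = - (/2) ^ m.
Proof.
  intros [[_ Hy] Hmin].
  assert (Hm : tail_set m (- (/2) ^ m)) by (split; [right; exists m |]; lra).
  specialize (Hmin _ Hm). lra.
Qed.

Lemma tail_set_nonempty m : min_dom (tail_set m).
Proof. exists (- (/2) ^ m). split; [right; exists m |]; lra. Qed.

(* [s] is a prefix, of length [L], of names of every tail set beyond [m]. *)
Definition tail_prefix (s : Baire) (L m : nat) : Prop :=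
  forall i, (i < L)%nat -> exists j, (j <= m)%nat /\ s i = ball_below j.

Definition extend_to_tail (s : Baire) (L m : nat) : Baire :=
  fun i => if Nat.ltb i L then s i else ball_below m.

Lemma extend_to_tail_agree s L m : agree (extend_to_tail s L m) s L.
Proof. intros i Hi. unfold extend_to_tail. apply Nat.ltb_lt in Hi. now rewrite Hi. Qed.

Lemma extend_to_tail_prefix s L L' m m' : tail_prefix s L m -> (m <= m')%nat ->
  tail_prefix (extend_to_tail s L m) L' m'.
Proof.
  intros Hs Hm i _. unfold extend_to_tail. destruct (Nat.ltb_spec i L).
  - destruct (Hs i H) as [j [Hj E]]. exists j; split; [lia | auto].
  - exists m; auto.
Qed.

Lemma extend_to_tail_names s L m : tail_prefix s L m ->
  delta_closed_neg (extend_to_tail s L m) (tail_set m).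
Proof.
  intros Hs x. unfold tail_set, extend_to_tail. split.
  - intros [Ho Hx]. split; auto. intros i Hb.
    destruct (Nat.ltb_spec i L).
    + destruct (Hs i H) as [j [Hj E]]. rewrite E, in_ball_below in Hb.
      pose proof (half_pow_le j m Hj). lra.
    + apply in_ball_below in Hb. lra.
  - intros [Ho Hi]. split; auto. specialize (Hi L).
    rewrite Nat.ltb_irrefl, in_ball_below in Hi.
    destruct (Rlt_or_le x (- (/2) ^ m)); tauto.
Qed.

Lemma delta_omega1_approx r y i : delta_omega1 r y -> Rabs (alpha (r i) - y) <= (/2) ^ i.
Proof.
  intros [_ [Hc Hl]]. apply Rnot_lt_le; intros Hfar.
  destruct (Hl (Rabs (alpha (r i) - y) - (/2) ^ i)) as [N HN]; [lra |].
  set (k := max N i).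
  specialize (HN k (Nat.le_max_l _ _)). unfold R_dist in HN.
  specialize (Hc i k (Nat.le_max_r _ _)).
  pose proof (Rabs_triang (alpha (r i) - alpha (r k)) (alpha (r k) - y)).
  replace (alpha (r i) - alpha (r k) + (alpha (r k) - y)) with (alpha (r i) - y) in * by ring.
  lra.
Qed.

Section Adversary.

Variable n : nat.
Variable H : prog.

(* What a reduction to the constant realizer of BWT_n provides. *)
Hypothesis H_solves_min : forall p A, delta_closed_neg p A -> min_dom A ->
  exists c, (c < n)%nat /\
  exists r, computes H (bpair p (fun _ => c)) r /\
  exists y, delta_omega1 r y /\ min_rel A y.

(* On every name extending [s] beyond [L], colour [c] makes [H] commit to an
   approximation far from every point of [tail_set m]. *)
Definition colour_spent (s : Baire) (L m c : nat) : Prop :=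
  exists i v, (forall p, agree p s L -> eval (bpair p (fun _ => c)) H i v) /\
    (forall y, - (/2) ^ m <= y -> (/2) ^ i < Rabs (alpha v - y)).

Lemma colour_spent_restrict s s' L L' m m' c :
  colour_spent s L m c -> agree s' s L -> (L <= L')%nat -> (m <= m')%nat ->
  colour_spent s' L' m' c.
Proof.
  intros [i [v [Hev Hfar]]] Hs HL Hm. exists i, v. split.
  - intros p A. apply Hev. apply (agree_trans _ s'); auto. eapply agree_le; eauto.
  - intros y Hy. apply Hfar. pose proof (half_pow_le m m' Hm). lra.
Qed.

Lemma colour_spent_unusable s L m c p r y :
  colour_spent s L m c -> agree p s L -> computes H (bpair p (fun _ => c)) r ->
  delta_omega1 r y -> - (/2) ^ m <= y -> False.
Proof.
  intros [i [v [Hev Hfar]]] A Hr Hy Hmy.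
  rewrite (eval_deterministic _ _ _ _ _ (Hev p A) (Hr i)) in Hfar.
  pose proof (delta_omega1_approx r y i Hy). specialize (Hfar y Hmy). lra.
Qed.

(* An approximation of -2^-m to within 2^-(m+3) is more than 2^-(m+3) away
   from every point above -2^-(m+1). *)
Lemma colour_spent_by_output p c m r :
  computes H (bpair p (fun _ => c)) r -> delta_omega1 r (- (/2) ^ m) ->
  exists N, colour_spent p N (S m) c.
Proof.
  intros Hr Hy. set (i := S (S (S m))).
  destruct (eval_continuous _ _ _ _ (Hr i)) as [N HN].
  exists N, i, (r i). split.
  - intros q A. apply HN, bpair_agree, A.
  - intros y Hmy. pose proof (delta_omega1_approx r _ i Hy) as Happrox.
    unfold i in *; simpl in *. pose proof (half_pow_pos m).
    pose proof (Rle_trans _ _ _ (RRle_abs _) Happrox). rewrite Rabs_left1; lra.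
Qed.

Definition stage (s : Baire) (L m : nat) (l : list nat) : Prop :=
  tail_prefix s L m /\ NoDup l /\
  forall c, In c l -> (c < n)%nat /\ colour_spent s L m c.

Lemma stage_init : stage (fun _ => 0%nat) 0 0 nil.
Proof. split; [intros i Hi; lia | split; [apply NoDup_nil | intros c []]]. Qed.

Lemma stage_next s L m l : stage s L m l ->
  exists s' L' m' c, stage s' L' m' (c :: l).
Proof.
  intros [Hs [Hl Hspent]].
  set (p := extend_to_tail s L m).
  destruct (H_solves_min p (tail_set m) (extend_to_tail_names s L m Hs)
              (tail_set_nonempty m)) as [c [Hc [r [Hr [y [Hy Hmin]]]]]].
  apply tail_set_min in Hmin; subst y.
  assert (Hnew : ~ In c l).
  { intros Hin. destruct (Hspent c Hin) as [_ Hcs].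
    apply (colour_spent_unusable s L m c p r (- (/2) ^ m)); auto.
    - apply extend_to_tail_agree.
    - lra. }
  destruct (colour_spent_by_output p c m r Hr Hy) as [N HN].
  exists p, (max L N), (S m), c. split; [| split].
  - apply extend_to_tail_prefix; auto.
  - constructor; auto.
  - intros c' [<- | Hin]; [split; auto |].
    + apply (colour_spent_restrict p p N (max L N) (S m)); auto; [intros i _; auto | lia].
    + destruct (Hspent c' Hin) as [Hc' Hcs]. split; auto.
      apply (colour_spent_restrict s p L (max L N) m); auto; [apply extend_to_tail_agree | lia].
Qed.

Lemma stage_length_le s L m l : stage s L m l -> (length l <= n)%nat.
Proof.
  intros [_ [Hl Hspent]].
  assert (Hincl : incl l (seq 0 n)) by (intros c Hc; apply in_seq; specialize (Hspent c Hc); lia).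
  rewrite <- (length_seq n 0). exact (NoDup_incl_length Hl Hincl).
Qed.

Lemma no_constant_colour_reduction : False.
Proof.
  assert (Hstages : forall k, exists s L m l, stage s L m l /\ length l = k).
  { induction k as [|k [s [L [m [l [Hst Hlen]]]]]].
    - exists (fun _ => 0%nat), 0%nat, 0%nat, nil. split; [apply stage_init | auto].
    - destruct (stage_next s L m l Hst) as [s' [L' [m' [c Hst']]]].
      exists s', L', m', (c :: l). split; [auto | simpl; lia]. }
  destruct (Hstages (S n)) as [s [L [m [l [Hst Hlen]]]]].
  pose proof (stage_length_le s L m l Hst). lia.
Qed.

End Adversary.

Theorem proposition3p4 : forall n : nat, (1 <= n)%nat ->
  ~ Wle delta_closed_neg delta_omega1 min_dom min_rel
        (delta_seq n) (delta_fin n) (BWT_dom n) (BWT_rel n).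
Proof.
  intros n Hn [H [K HW]].
  apply (no_constant_colour_reduction n H). intros p A Hp HA.
  destruct (HW _ (cluster_point_realizer n) p A Hp HA) as [k [_ [r [Hr Hy]]]].
  exists (cluster_point n k). split; [apply cluster_point_lt; auto |].
  exists r; auto.
Qed.
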